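(* For $\tilde\varphi=\mathrm{Id}+f\in\widetilde{\operatorname{Diff}}(S^1)$ define $R(\tilde\varphi)=2(\tilde\varphi')^{1/2}e^{i(\tilde\varphi-\mathrm{Id})/2}=2(1+f')^{1/2}e^{if/2}\in C^\infty_{2\pi\text{-per}}(\mathbb R,\mathbb C)$. Then $T_{\tilde\varphi}R.h=(\tilde\varphi')^{-1/2}h'e^{if/2}+i(\tilde\varphi')^{1/2}e^{if/2}h$, and for tangent vectors $h=X_1\circ\tilde\varphi$, $k=X_2\circ\tilde\varphi$ (with $X_1,X_2$ smooth $2\pi$-periodic) $$\operatorname{Re}\int_0^{2\pi}T_{\tilde\varphi}R.h\ \overline{T_{\tilde\varphi}R.k}\,dx=\int_0^{2\pi}\big(X_1X_2+X_1'X_2'\big)\,dx,$$ i.e. the pullback under $R$ of the $L^2$ inner product on $C^\infty_{2\pi\text{-per}}(\mathbb R,\mathbb C)$ is the right-invariant Sobolev $H^1$-metric.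
   Context: $\widetilde{\operatorname{Diff}}(S^1)$ is the group of lifts $\tilde\varphi(x)=x+f(x)$, $f\in C^\infty(\mathbb R)$ $2\pi$-periodic with $f'>-1$, of orientation-preserving smooth diffeomorphisms $\varphi$ of $S^1$ via $\varphi(e^{ix})=e^{i\tilde\varphi(x)}$; tangent vectors at $\tilde\varphi$ are $2\pi$-periodic smooth functions $h$ (variations of $f$), written $h=X\circ\tilde\varphi$. The right-invariant $H^1$-metric is $G_\varphi(X\circ\varphi,Y\circ\varphi)=\int (XY+X'Y')\,dx$ over one period. *)

(* classical reals. Complex-valued functions are represented by
   their real and imaginary parts. *)
From Stdlib Require Import Reals.
Open Scope R_scope.

Definition smooth (g : R -> R) : Prop :=
  exists D : nat -> R -> R, D 0%nat = g /\
    forall (n : nat) (x : R), derivable_pt_lim (D n) x (D (S n) x).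

Definition periodic2pi (g : R -> R) : Prop := forall x, g (x + 2 * PI) = g x.

(* R(phi) = 2 (1+f')^{1/2} e^{i f/2}, for phi = Id + f with derivative 1 + f'. *)
Definition Rmap_re (f f' : R -> R) (x : R) : R := 2 * sqrt (1 + f' x) * cos (f x / 2).
Definition Rmap_im (f f' : R -> R) (x : R) : R := 2 * sqrt (1 + f' x) * sin (f x / 2).

Definition TR_re (f f' h h' : R -> R) (x : R) : R :=
  / sqrt (1 + f' x) * h' x * cos (f x / 2) - sqrt (1 + f' x) * sin (f x / 2) * h x.
Definition TR_im (f f' h h' : R -> R) (x : R) : R :=
  / sqrt (1 + f' x) * h' x * sin (f x / 2) + sqrt (1 + f' x) * cos (f x / 2) * h x.

(* The first two claims (the formula for T_phi R . h) are a
   direct differentiation in the parameter t.  For the metric identity, write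
   s = (phi')^{1/2} and u = e^{i f/2}.  Since |u| = 1, the real inner product
   of T R.h = (h'/s + i s h) u with T R.k equals h'k'/s^2 + s^2 h k.  With
   h = X1 o phi we have h' = (X1' o phi) phi', and likewise for k, so the
   integrand is phi' * (G o phi) with G = X1 X2 + X1' X2'.  The substitution
   y = phi(x) turns its integral over [0, 2 pi] into the integral of G over
   [f 0, 2 pi + f 0] (f is 2 pi-periodic), which equals the integral over
   [0, 2 pi] because G is 2 pi-periodic. *)

From Coquelicot Require Import Coquelicot.
From Stdlib Require Import Reals Lra FunctionalExtensionality.
Open Scope R_scope.

Lemma smooth_derivative_continuous (g g' : R -> R) :
  smooth g -> (forall x, derivable_pt_lim g x (g' x)) ->
  forall x, continuity_pt g' x.
Proof.
  intros [D [D0 HD]] Hg x.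
  assert (E : g' = D 1%nat).
  { apply functional_extensionality; intro y.
    apply (uniqueness_limite g y); [apply Hg | rewrite <- D0; apply HD]. }
  rewrite E. apply derivable_continuous_pt. exists (D 2%nat x). apply HD.
Qed.

Lemma derivable_everywhere_continuous (g g' : R -> R) :
  (forall x, derivable_pt_lim g x (g' x)) -> forall x, continuity_pt g x.
Proof. intros Hg x. apply derivable_continuous_pt. exists (g' x). apply Hg. Qed.

Lemma periodic_derivative (g g' : R -> R) :
  periodic2pi g -> (forall x, derivable_pt_lim g x (g' x)) -> periodic2pi g'.
Proof.
  intros Hp Hg x. apply (uniqueness_limite g x); [| apply Hg].
  replace g with (fun y => g (y + 2 * PI)) at 1
    by (apply functional_extensionality; apply Hp).
  replace (g' (x + 2 * PI)) with (g' (x + 2 * PI) * 1) by ring.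
  apply (derivable_pt_lim_comp (fun y => y + 2 * PI) g x 1).
  - apply is_derive_Reals. auto_derive; auto.
  - apply Hg.
Qed.

Lemma derivative_of_composition (X X' p p' h h' : R -> R) :
  (forall x, derivable_pt_lim X x (X' x)) -> (forall x, derivable_pt_lim p x (p' x)) ->
  (forall x, h x = X (p x)) -> (forall x, derivable_pt_lim h x (h' x)) ->
  forall x, h' x = X' (p x) * p' x.
Proof.
  intros HX Hp Hh Hh' x.
  replace h with (comp X p) in Hh' by (apply functional_extensionality; intro; symmetry; apply Hh).
  apply (uniqueness_limite _ x _ _ (Hh' x)).
  apply derivable_pt_lim_comp; [apply Hp | apply HX].
Qed.

Lemma TR_re_is_derivative (f f' h h' : R -> R) x : -1 < f' x ->
  derivable_pt_lim
    (fun t => Rmap_re (fun y => f y + t * h y) (fun y => f' y + t * h' y) x)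
    0 (TR_re f f' h h' x).
Proof.
  intro Hf. apply is_derive_Reals. unfold Rmap_re, TR_re. auto_derive; [lra |].
  rewrite !Rmult_0_l, !Rplus_0_r. unfold Rdiv.
  field. apply Rgt_not_eq, sqrt_lt_R0; lra.
Qed.

Lemma TR_im_is_derivative (f f' h h' : R -> R) x : -1 < f' x ->
  derivable_pt_lim
    (fun t => Rmap_im (fun y => f y + t * h y) (fun y => f' y + t * h' y) x)
    0 (TR_im f f' h h' x).
Proof.
  intro Hf. apply is_derive_Reals. unfold Rmap_im, TR_im. auto_derive; [lra |].
  rewrite !Rmult_0_l, !Rplus_0_r. unfold Rdiv.
  field. apply Rgt_not_eq, sqrt_lt_R0; lra.
Qed.

Lemma RInt_periodic_shift (G : R -> R) a :
  (forall x, continuity_pt G x) -> periodic2pi G ->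
  RInt G a (2 * PI + a) = RInt G 0 (2 * PI).
Proof.
  intros Hc Hp.
  assert (Ex : forall u v, ex_RInt G u v).
  { intros u v. apply (ex_RInt_continuous (V := R_CompleteNormedModule)).
    intros; apply continuity_pt_filterlim, Hc. }
  assert (Shift : RInt G (2 * PI) (2 * PI + a) = RInt G 0 a).
  { pose proof (RInt_comp_lin G 1 (2 * PI) 0 a (Ex _ _)) as E.
    replace (1 * 0 + 2 * PI) with (2 * PI) in E by ring.
    replace (1 * a + 2 * PI) with (2 * PI + a) in E by ring.
    rewrite <- E. apply RInt_ext. intros x _.
    unfold scal; simpl; unfold mult; simpl. rewrite !Rmult_1_l. apply Hp. }
  rewrite <- (RInt_Chasles G a (2 * PI) (2 * PI + a)) by auto.
  rewrite <- (RInt_Chasles G 0 a (2 * PI)) by auto.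
  rewrite Shift. unfold plus; simpl. ring.
Qed.

Lemma RInt_circle_diffeo_invariant (G f f' : R -> R) :
  (forall x, continuity_pt G x) -> periodic2pi G ->
  periodic2pi f -> (forall x, derivable_pt_lim f x (f' x)) ->
  (forall x, continuity_pt f' x) ->
  RInt (fun x => (1 + f' x) * G (x + f x)) 0 (2 * PI) = RInt G 0 (2 * PI).
Proof.
  intros CG PG Pf Df Cf'.
  rewrite (RInt_comp G (fun z => z + f z) (fun z => 1 + f' z)).
  - replace (f (2 * PI)) with (f 0) by (rewrite <- (Pf 0), Rplus_0_l; reflexivity).
    rewrite Rplus_0_l. apply RInt_periodic_shift; assumption.
  - intros; apply continuity_pt_filterlim, CG.
  - intros x _. split.
    + apply is_derive_Reals, derivable_pt_lim_plus; [apply derivable_pt_lim_id | apply Df].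
    + apply continuity_pt_filterlim, continuity_pt_plus; [apply continuity_pt_const | apply Cf'].
      intros a b; reflexivity.
Qed.

Lemma rotated_inner_product (s c sn u u' v v' : R) :
  s <> 0 -> c * c + sn * sn = 1 ->
  (/ s * u' * c - s * sn * u) * (/ s * v' * c - s * sn * v)
  + (/ s * u' * sn + s * c * u) * (/ s * v' * sn + s * c * v)
  = u' * v' / (s * s) + s * s * (u * v).
Proof.
  intros Hs Hcs.
  transitivity ((c * c + sn * sn) * (u' * v' / (s * s) + s * s * (u * v))).
  - field. exact Hs.
  - rewrite Hcs. ring.
Qed.

Lemma pullback_integrand (f f' X1 X1' X2 X2' h h' k k' : R -> R) x :
  -1 < f' x -> h x = X1 (x + f x) -> k x = X2 (x + f x) ->
  h' x = X1' (x + f x) * (1 + f' x) -> k' x = X2' (x + f x) * (1 + f' x) ->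
  TR_re f f' h h' x * TR_re f f' k k' x + TR_im f f' h h' x * TR_im f f' k k' x
  = (1 + f' x) * (X1 (x + f x) * X2 (x + f x) + X1' (x + f x) * X2' (x + f x)).
Proof.
  intros Hf Eh Ek Eh' Ek'. unfold TR_re, TR_im.
  assert (Hsq : sqrt (1 + f' x) * sqrt (1 + f' x) = 1 + f' x) by (apply sqrt_sqrt; lra).
  assert (Hpos : 0 < sqrt (1 + f' x)) by (apply sqrt_lt_R0; lra).
  assert (Hcs : cos (f x / 2) * cos (f x / 2) + sin (f x / 2) * sin (f x / 2) = 1).
  { rewrite Rplus_comm. apply sin2_cos2. }
  rewrite rotated_inner_product by (lra || exact Hcs).
  rewrite Hsq, Eh, Ek, Eh', Ek'. field. lra.
Qed.

Lemma RiemannInt_eq_of_RInt (F G : R -> R) a b :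
  (forall x, continuity_pt F x) -> (forall x, continuity_pt G x) ->
  RInt F a b = RInt G a b ->
  exists (prF : Riemann_integrable F a b) (prG : Riemann_integrable G a b),
    RiemannInt prF = RiemannInt prG.
Proof.
  intros CF CG E.
  assert (ExF : ex_RInt F a b).
  { apply (ex_RInt_continuous (V := R_CompleteNormedModule)).
    intros; apply continuity_pt_filterlim, CF. }
  assert (ExG : ex_RInt G a b).
  { apply (ex_RInt_continuous (V := R_CompleteNormedModule)).
    intros; apply continuity_pt_filterlim, CG. }
  exists (ex_RInt_Reals_0 _ _ _ ExF), (ex_RInt_Reals_0 _ _ _ ExG).
  rewrite <- !RInt_Reals. exact E.
Qed.

Theorem mainTheorem14 :
  forall (f f' X1 X1' X2 X2' h h' k k' : R -> R),
    smooth f -> periodic2pi f ->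
    (forall x, derivable_pt_lim f x (f' x)) ->
    (forall x, -1 < f' x) ->
    smooth X1 -> periodic2pi X1 -> (forall x, derivable_pt_lim X1 x (X1' x)) ->
    smooth X2 -> periodic2pi X2 -> (forall x, derivable_pt_lim X2 x (X2' x)) ->
    (forall x, h x = X1 (x + f x)) -> (forall x, derivable_pt_lim h x (h' x)) ->
    (forall x, k x = X2 (x + f x)) -> (forall x, derivable_pt_lim k x (k' x)) ->
    (forall x, derivable_pt_lim
        (fun t => Rmap_re (fun y => f y + t * h y) (fun y => f' y + t * h' y) x)
        0 (TR_re f f' h h' x)) /\
    (forall x, derivable_pt_lim
        (fun t => Rmap_im (fun y => f y + t * h y) (fun y => f' y + t * h' y) x)
        0 (TR_im f f' h h' x)) /\
    exists (pr1 : Riemann_integrable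
                    (fun x => TR_re f f' h h' x * TR_re f f' k k' x
                              + TR_im f f' h h' x * TR_im f f' k k' x) 0 (2 * PI))
           (pr2 : Riemann_integrable
                    (fun x => X1 x * X2 x + X1' x * X2' x) 0 (2 * PI)),
      RiemannInt pr1 = RiemannInt pr2.
Proof.
  intros f f' X1 X1' X2 X2' h h' k k' Sf Pf Df Hf S1 P1 D1 S2 P2 D2 Eh Dh Ek Dk.
  split; [intro x; apply TR_re_is_derivative, Hf |].
  split; [intro x; apply TR_im_is_derivative, Hf |].
  set (G := fun y => X1 y * X2 y + X1' y * X2' y).
  assert (Dphi : forall x, derivable_pt_lim (fun z => z + f z) x (1 + f' x))
    by (intro; apply derivable_pt_lim_plus; [apply derivable_pt_lim_id | apply Df]).
  assert (Cf' := smooth_derivative_continuous f f' Sf Df).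
  assert (CG : forall y, continuity_pt G y).
  { intro y. unfold G.
    apply continuity_pt_plus; apply continuity_pt_mult;
      eauto using derivable_everywhere_continuous, smooth_derivative_continuous. }
  assert (PG : periodic2pi G).
  { intro y. unfold G.
    rewrite P1, P2, (periodic_derivative X1 X1' P1 D1), (periodic_derivative X2 X2' P2 D2).
    reflexivity. }
  assert (Integrand : forall x,
    TR_re f f' h h' x * TR_re f f' k k' x + TR_im f f' h h' x * TR_im f f' k k' x
    = (1 + f' x) * G (x + f x)).
  { intro x. apply pullback_integrand; auto.
    - exact (derivative_of_composition X1 X1' _ _ h h' D1 Dphi Eh Dh x).
    - exact (derivative_of_composition X2 X2' _ _ k k' D2 Dphi Ek Dk x). }
  apply RiemannInt_eq_of_RInt.
  - intro x. rewrite (functional_extensionality _ _ Integrand).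
    apply continuity_pt_mult.
    + apply continuity_pt_plus; [apply continuity_pt_const; intros a b; reflexivity | apply Cf'].
    + apply (continuity_pt_comp (fun z => z + f z) G);
        [exact (derivable_everywhere_continuous _ _ Dphi x) | apply CG].
  - exact CG.
  - rewrite (RInt_ext _ (fun x => (1 + f' x) * G (x + f x))) by (intros; apply Integrand).
    apply RInt_circle_diffeo_invariant; assumption.
Qed.
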